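(* Let $m$ be a positive integer. If $\|m\alpha\|\ge\|q_{k-1}\alpha\|+(a_{k+1}+1)\|q_k\alpha\|$ for some $k\ge2$, then $\mathrm{ab}_\alpha(m)<q_k-1$.
   Context: $\alpha\in(0,1)$ irrational, $\alpha=[0;a_1,a_2,\ldots]$ with positive integers $a_i$, $a_1\ge2$; $q_{-1}=0$, $q_0=1$, $q_1=a_1$, $q_k=a_kq_{k-1}+q_{k-2}$ ($k\ge2$). $\|x\|$ is the distance from $x$ to the nearest integer. Sturmian words of slope $\alpha$: with $R(\rho)=\{\rho+\alpha\}$ on $[0,1)$ and either $I_0=[0,1-\alpha)$ or $I_0=(0,1-\alpha]$ ($I_1$ its complement), $\mathbf{s}_{\rho,\alpha}$ has $n$-th letter $0$ iff $R^n(\rho)\in I_0$; they share a set $\mathcal{L}_\alpha$ of finite factors. An abelian power of period $m$ and exponent $e$ is a concatenation of $e$ pairwise abelian equivalent words (same numbers of $0$s and $1$s) of length $m$; $\mathrm{ab}_\alpha(m)$ is the maximum exponent of an abelian power of period $m$ in $\mathcal{L}_\alpha$ (it is known that $\mathrm{ab}_\alpha(m)=\lfloor 1/\|m\alpha\|\rfloor$). *)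

From Stdlib Require Import Reals Lra Lia ZArith Arith List.
Open Scope R_scope.

Definition irrational (x : R) : Prop :=
  ~ exists (p q : Z), q <> 0%Z /\ x = IZR p / IZR q.

Definition frac (x : R) : R := frac_part x.

Definition dnint (x : R) : R := Rmin (frac x) (1 - frac x).

(* Continued fraction expansion alpha = [0; a_1, a_2, ...] via the Gauss map:
   cf_rem alpha 0 = alpha, cf_rem alpha (n+1) = 1/x_n - floor(1/x_n),
   and a_{n+1} = floor (1 / x_n). *)
Fixpoint cf_rem (alpha : R) (n : nat) : R :=
  match n with
  | O => alpha
  | S n' => frac (/ cf_rem alpha n')
  end.

(* Partial quotients: pq alpha k = a_k for k >= 1 (pq alpha 0 = a_0 = 0 is unused). *)
Definition pq (alpha : R) (k : nat) : nat :=
  match k with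
  | O => 0%nat
  | S k' => Z.to_nat (Int_part (/ cf_rem alpha k'))
  end.

Fixpoint qd (alpha : R) (k : nat) : nat :=
  match k with
  | O => 1%nat
  | S k' =>
      match k' with
      | O => pq alpha 1
      | S k'' => (pq alpha k * qd alpha k' + qd alpha k'')%nat
      end
  end.

(* Sturmian word s_{rho,alpha}; letter false = 0, true = 1.
   left_closed = true : I_0 = [0, 1 - alpha);  left_closed = false : I_0 = (0, 1 - alpha].
   n-th letter (n >= 0) is 0 iff R^n(rho) = {rho + n alpha} lies in I_0. *)
Definition in_I0 (alpha : R) (left_closed : bool) (x : R) : Prop :=
  if left_closed then 0 <= x < 1 - alpha else 0 < x <= 1 - alpha.

Definition sturmian_letter (alpha rho : R) (left_closed : bool) (n : nat) (b : bool) : Prop :=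
  (b = false <-> in_I0 alpha left_closed (frac (rho + INR n * alpha))).

Definition in_L (alpha : R) (w : list bool) : Prop :=
  exists (rho : R) (left_closed : bool) (i : nat),
    (0 <= rho < 1) /\
    forall j, (j < length w)%nat ->
      sturmian_letter alpha rho left_closed (i + j)%nat (nth j w false).

Definition abelian_eq (u v : list bool) : Prop :=
  (count_occ Bool.bool_dec u false = count_occ Bool.bool_dec v false)%nat /\
  (count_occ Bool.bool_dec u true = count_occ Bool.bool_dec v true)%nat.

Definition abelian_power (m e : nat) (w : list bool) : Prop :=
  exists blocks : list (list bool),
    (length blocks = e)%nat /\
    (forall u, In u blocks -> (length u = m)%nat) /\
    (forall u v, In u blocks -> In v blocks -> abelian_eq u v) /\
    w = concat blocks.

Definition has_ab_power (alpha : R) (m e : nat) : Prop :=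
  exists w, in_L alpha w /\ abelian_power m e w.

(* is_ab alpha m n  <->  ab_alpha(m) = n, i.e. n is the maximum exponent of an
   abelian power of period m in L_alpha. *)
Definition is_ab (alpha : R) (m n : nat) : Prop :=
  has_ab_power alpha m n /\ forall e, has_ab_power alpha m e -> (e <= n)%nat.

From Stdlib Require Import Reals Arith Lra Lia ZArith List.
Open Scope R_scope.

(* Reading a Sturmian factor letter by letter, each 1 is a unit jump of the
   integer part of y_j = rho + j alpha (rounded according to the convention
   for I_0).  Hence a factor of length L starting at position i contains
   floor(y_(i+L)) - floor(y_i) ones, and an abelian power of period m and
   exponent n, whose blocks all contain K ones, gives n |m alpha - K| < 1,
   so n ||m alpha|| < 1.
   On the continued fraction side ||q_k alpha|| = theta_k := |q_k alpha - p_k|,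
   theta_(k-1) = a_(k+1) theta_k + theta_(k+1) and
   q_k theta_(k-1) + q_(k-1) theta_k = 1; with q_(k-1) >= 2 these give
   (q_k - 1) (theta_(k-1) + (a_(k+1) + 1) theta_k) >= 1.  Under the hypothesis
   this bounds ||m alpha|| below by 1 / (q_k - 1), so n < q_k - 1. *)

Definition unit_interval (lc : bool) (t : R) : Prop :=
  if lc then 0 <= t < 1 else 0 < t <= 1.

(* The floor of [y] for [I_0 = [0, 1 - alpha)], the ceiling minus one for
   [I_0 = (0, 1 - alpha]]. *)
Definition sturm_floor (lc : bool) (y : R) : Z :=
  if lc then Int_part y else (- up (- y))%Z.

Lemma sturm_floor_spec lc y : unit_interval lc (y - IZR (sturm_floor lc y)).
Proof.
  destruct lc; simpl.
  - destruct (base_Int_part y); lra.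
  - rewrite opp_IZR; destruct (archimed (- y)); lra.
Qed.

Lemma sturm_floor_unique lc y z :
  unit_interval lc (y - IZR z) -> sturm_floor lc y = z.
Proof.
  destruct lc; simpl; intros Hz.
  - symmetry; apply Int_part_spec; lra.
  - rewrite <- (tech_up (- y) (- z)); [lia | rewrite opp_IZR; lra ..].
Qed.

Lemma unit_interval_dist lc s t :
  unit_interval lc s -> unit_interval lc t -> Rabs (s - t) < 1.
Proof. destruct lc; simpl; intros; apply Rabs_def1; lra. Qed.

Lemma in_I0_frac_iff alpha lc y :
  0 < alpha ->
  in_I0 alpha lc (frac y) <->
  unit_interval lc (y + alpha - IZR (sturm_floor lc y)).
Proof.
  intros Ha; pose proof (sturm_floor_spec lc y) as Hy.
  unfold in_I0, frac, frac_part; destruct lc; simpl in *.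
  - split; lra.
  - set (z := (- up (- y))%Z) in *.
    destruct (Rlt_or_le (y - IZR z) 1).
    + rewrite <- (Int_part_spec y z) by lra; split; lra.
    + rewrite <- (Int_part_spec y (z + 1)), plus_IZR by (rewrite plus_IZR; lra).
      split; lra.
Qed.

Lemma sturm_floor_step alpha lc y (b : bool) :
  0 < alpha < 1 ->
  (b = false <-> in_I0 alpha lc (frac y)) ->
  IZR (sturm_floor lc (y + alpha)) = IZR (sturm_floor lc y) + (if b then 1 else 0).
Proof.
  intros Ha Hb; rewrite in_I0_frac_iff in Hb by apply Ha.
  pose proof (sturm_floor_spec lc y) as Hy.
  set (z := sturm_floor lc y) in *.
  destruct b.
  - assert (Hout : ~ unit_interval lc (y + alpha - IZR z))
      by (intros H; apply Hb in H; discriminate).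
    rewrite (sturm_floor_unique lc (y + alpha) (z + 1)), plus_IZR; [ring|].
    rewrite plus_IZR; destruct lc; simpl in *; lra.
  - rewrite (sturm_floor_unique lc (y + alpha) z); [ring|].
    now apply Hb.
Qed.

Definition orbit (alpha rho : R) (j : nat) : R := rho + INR j * alpha.

Lemma count_ones_factor alpha rho lc (w : list bool) (i : nat) :
  0 < alpha < 1 ->
  (forall j, (j < length w)%nat ->
     sturmian_letter alpha rho lc (i + j) (nth j w false)) ->
  INR (count_occ Bool.bool_dec w true) =
  IZR (sturm_floor lc (orbit alpha rho (i + length w)))
  - IZR (sturm_floor lc (orbit alpha rho i)).
Proof.
  intros Ha; revert i; induction w as [|b w IH]; intros i Hw; simpl length.
  - rewrite Nat.add_0_r; simpl; ring.
  - assert (Hb : sturmian_letter alpha rho lc i b).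
    { rewrite <- (Nat.add_0_r i); exact (Hw 0%nat ltac:(simpl; lia)). }
    pose proof (sturm_floor_step alpha lc _ b Ha Hb) as Hstep.
    replace (rho + INR i * alpha + alpha) with (orbit alpha rho (S i)) in Hstep
      by (unfold orbit; rewrite S_INR; ring).
    assert (IHw : INR (count_occ Bool.bool_dec w true) =
                  IZR (sturm_floor lc (orbit alpha rho (S i + length w)))
                  - IZR (sturm_floor lc (orbit alpha rho (S i)))).
    { apply IH; intros j Hj; rewrite Nat.add_succ_comm; apply (Hw (S j)); simpl; lia. }
    rewrite <- Nat.add_succ_comm.
    destruct b; simpl count_occ; rewrite ?S_INR, IHw, Hstep; unfold orbit; ring.
Qed.

Lemma count_occ_concat_const {A : Type} eq_dec (l : list (list A)) (x : A) K :
  (forall u, In u l -> count_occ eq_dec u x = K) ->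
  count_occ eq_dec (concat l) x = (length l * K)%nat.
Proof.
  induction l as [|u l IH]; intros HK; simpl; [reflexivity|].
  rewrite count_occ_app, (HK u (in_eq u l)), IH; [reflexivity|].
  intros v Hv; exact (HK v (in_cons u v l Hv)).
Qed.

Lemma length_concat_const {A : Type} (l : list (list A)) m :
  (forall u, In u l -> length u = m) -> length (concat l) = (length l * m)%nat.
Proof.
  induction l as [|u l IH]; intros Hm; simpl; [reflexivity|].
  rewrite length_app, (Hm u (in_eq u l)), IH; [reflexivity|].
  intros v Hv; exact (Hm v (in_cons u v l Hv)).
Qed.

Lemma abelian_power_approx alpha m n :
  0 < alpha < 1 -> has_ab_power alpha m n ->
  exists K : nat, INR n * Rabs (INR m * alpha - INR K) < 1.
Proof.
  intros Ha [w [[rho [lc [i [_ Hw]]]] [blocks [Hn [Hm [Hab ->]]]]]].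
  destruct blocks as [|u0 bs] eqn:Eb.
  { exists 0%nat; subst n; simpl; lra. }
  rewrite <- Eb in *.
  set (K := count_occ Bool.bool_dec u0 true).
  assert (HK : forall u, In u blocks -> count_occ Bool.bool_dec u true = K).
  { intros u Hu; apply (Hab u u0 Hu); rewrite Eb; now left. }
  exists K.
  pose proof (count_ones_factor alpha rho lc _ i Ha Hw) as Hcount.
  rewrite (count_occ_concat_const _ _ _ K HK), (length_concat_const _ m Hm) in Hcount.
  rewrite Hn, mult_INR in Hcount.
  pose proof (unit_interval_dist lc _ _
                (sturm_floor_spec lc (orbit alpha rho (i + n * m)))
                (sturm_floor_spec lc (orbit alpha rho i))) as Hdist.
  replace (orbit alpha rho (i + n * m) - _ - (orbit alpha rho i - _))
    with (INR n * (INR m * alpha - INR K)) in Hdist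
    by (unfold orbit in *; rewrite plus_INR, mult_INR in *; lra).
  rewrite Rabs_mult, (Rabs_pos_eq (INR n)) in Hdist by apply pos_INR.
  exact Hdist.
Qed.

Lemma dnint_le_dist x (z : Z) : dnint x <= Rabs (x - IZR z).
Proof.
  unfold dnint, frac, frac_part.
  destruct (base_Int_part x).
  destruct (Z_le_gt_dec z (Int_part x)) as [Hz|Hz].
  - apply IZR_le in Hz.
    apply (Rle_trans _ _ _ (Rmin_l _ _)); unfold Rabs; destruct Rcase_abs; lra.
  - assert (Hz' : IZR (Int_part x) + 1 <= IZR z)
      by (rewrite <- plus_IZR; apply IZR_le; lia).
    apply (Rle_trans _ _ _ (Rmin_r _ _)); unfold Rabs; destruct Rcase_abs; lra.
Qed.

Lemma dnint_IZR_add z t : Rabs t <= 1/2 -> dnint (IZR z + t) = Rabs t.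
Proof.
  intros Ht; unfold dnint, frac, frac_part.
  destruct (Rle_or_lt 0 t).
  - rewrite Rabs_pos_eq in * by lra.
    rewrite <- (Int_part_spec _ z) by lra.
    unfold Rmin; destruct Rle_dec; lra.
  - rewrite Rabs_left in * by lra.
    rewrite <- (Int_part_spec _ (z - 1)), minus_IZR by (rewrite minus_IZR; lra).
    unfold Rmin; destruct Rle_dec; lra.
Qed.

Lemma abelian_power_exponent_bound alpha m n :
  0 < alpha < 1 -> has_ab_power alpha m n -> INR n * dnint (INR m * alpha) < 1.
Proof.
  intros Ha Hn.
  destruct (abelian_power_approx alpha m n Ha Hn) as [K HK].
  pose proof (dnint_le_dist (INR m * alpha) (Z.of_nat K)) as Hd.
  rewrite <- INR_IZR_INZ in Hd.
  eapply Rle_lt_trans; [|exact HK].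
  apply Rmult_le_compat_l; [apply pos_INR | exact Hd].
Qed.

Fixpoint conv_num (alpha : R) (k : nat) : nat :=
  match k with
  | O => 0%nat
  | S k' =>
      match k' with
      | O => 1%nat
      | S k'' => (pq alpha k * conv_num alpha k' + conv_num alpha k'')%nat
      end
  end.

Definition conv_err (alpha : R) (n : nat) : R :=
  INR (qd alpha n) * alpha - INR (conv_num alpha n).

Definition conv_dist (alpha : R) (n : nat) : R := Rabs (conv_err alpha n).

Section Convergents.

Variable alpha : R.

Lemma qd_SS n :
  qd alpha (S (S n)) = (pq alpha (S (S n)) * qd alpha (S n) + qd alpha n)%nat.
Proof. reflexivity. Qed.

Lemma conv_num_SS n :
  conv_num alpha (S (S n))
  = (pq alpha (S (S n)) * conv_num alpha (S n) + conv_num alpha n)%nat.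
Proof. reflexivity. Qed.

Lemma conv_err_SS n :
  conv_err alpha (S (S n))
  = INR (pq alpha (S (S n))) * conv_err alpha (S n) + conv_err alpha n.
Proof.
  unfold conv_err; rewrite qd_SS, conv_num_SS, !plus_INR, !mult_INR; ring.
Qed.

Lemma INR_pq_S n :
  0 < cf_rem alpha n ->
  INR (pq alpha (S n)) = / cf_rem alpha n - cf_rem alpha (S n).
Proof.
  intros Hx; simpl pq; simpl cf_rem; unfold frac, frac_part.
  destruct (base_Int_part (/ cf_rem alpha n)).
  assert (0 < / cf_rem alpha n) by (apply Rinv_0_lt_compat; lra).
  assert (-1 < Int_part (/ cf_rem alpha n))%Z by (apply lt_IZR; lra).
  rewrite INR_IZR_INZ, Z2Nat.id by lia; ring.
Qed.

Lemma pq_S_ge1 n : 0 < cf_rem alpha n < 1 -> (1 <= pq alpha (S n))%nat.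
Proof.
  intros Hx.
  assert (1 < / cf_rem alpha n)
    by (rewrite <- Rinv_1; apply Rinv_lt_contravar; lra).
  pose proof (base_fp (/ cf_rem alpha n)) as Hfrac.
  pose proof (INR_pq_S n (proj1 Hx)) as Ha.
  simpl cf_rem in Ha; unfold frac in Ha.
  enough (Hpos : (0 < pq alpha (S n))%nat) by lia.
  apply (INR_lt 0); rewrite Ha; simpl INR; lra.
Qed.

(* Assumes positivity of x_0, ..., x_n only: [cf_rem_pos] uses it to derive
   positivity of x_(n+1) from irrationality. *)
Lemma conv_err_S_upto n :
  (forall j, (j <= n)%nat -> 0 < cf_rem alpha j) ->
  conv_err alpha (S n) = - cf_rem alpha (S n) * conv_err alpha n.
Proof.
  induction n as [|n IH]; intros Hx.
  - pose proof (Hx 0%nat (le_n 0)) as H0.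
    unfold conv_err; change (qd alpha 1) with (pq alpha 1).
    rewrite (INR_pq_S 0 H0); change (cf_rem alpha 0) with alpha in *.
    simpl; field; lra.
  - rewrite conv_err_SS, IH, (INR_pq_S (S n)) by (auto; intros; apply Hx; lia).
    field; apply Rgt_not_eq, Hx; lia.
Qed.

Hypothesis alpha_01 : 0 < alpha < 1.

Lemma qd_ge1 n : (1 <= qd alpha n)%nat.
Proof.
  assert (H1 : (1 <= pq alpha 1)%nat) by (apply (pq_S_ge1 0); exact alpha_01).
  enough (H : (1 <= qd alpha n /\ 1 <= qd alpha (S n))%nat) by apply H.
  induction n as [|n [IH1 IH2]]; [split; [auto | exact H1]|].
  split; [exact IH2 | rewrite qd_SS; lia].
Qed.

Hypothesis alpha_irr : irrational alpha.

Lemma cf_rem_pos n : 0 < cf_rem alpha n.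
Proof.
  enough (H : forall j, (j <= n)%nat -> 0 < cf_rem alpha j) by (apply H; lia).
  induction n as [|n IH]; intros j Hj.
  - replace j with 0%nat by lia; exact (proj1 alpha_01).
  - destruct (Nat.eq_dec j (S n)) as [->|]; [|apply IH; lia].
    destruct (base_fp (/ cf_rem alpha n)) as [[Hpos|Hzero] _]; [exact Hpos|].
    exfalso; apply alpha_irr.
    pose proof (conv_err_S_upto n IH) as He.
    simpl cf_rem in He; unfold frac in He; rewrite Hzero in He.
    exists (Z.of_nat (conv_num alpha (S n))), (Z.of_nat (qd alpha (S n))).
    pose proof (qd_ge1 (S n)).
    assert (INR (qd alpha (S n)) <> 0) by (apply not_0_INR; lia).
    split; [lia|].
    rewrite <- !INR_IZR_INZ; unfold conv_err in He.
    field_simplify_eq; [lra | assumption].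
Qed.

Lemma cf_rem_lt1 n : cf_rem alpha n < 1.
Proof.
  destruct n; [exact (proj2 alpha_01)|].
  apply (base_fp (/ cf_rem alpha n)).
Qed.

Lemma conv_dist_0 : conv_dist alpha 0 = alpha.
Proof.
  unfold conv_dist, conv_err; simpl.
  rewrite Rabs_pos_eq; lra.
Qed.

Lemma conv_dist_S n : conv_dist alpha (S n) = cf_rem alpha (S n) * conv_dist alpha n.
Proof.
  unfold conv_dist.
  rewrite (conv_err_S_upto n) by (intros; apply cf_rem_pos).
  rewrite Rabs_mult, Rabs_Ropp, Rabs_pos_eq; [reflexivity|].
  apply Rlt_le, cf_rem_pos.
Qed.

Lemma conv_dist_pos n : 0 < conv_dist alpha n.
Proof.
  induction n as [|n IH]; [rewrite conv_dist_0; lra|].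
  rewrite conv_dist_S; apply Rmult_lt_0_compat; [apply cf_rem_pos | exact IH].
Qed.

Lemma conv_dist_S_lt n : conv_dist alpha (S n) < conv_dist alpha n.
Proof.
  rewrite conv_dist_S.
  pose proof (cf_rem_lt1 (S n)); pose proof (conv_dist_pos n); nra.
Qed.

Lemma conv_dist_SS n :
  conv_dist alpha (S (S n))
  = conv_dist alpha n - INR (pq alpha (S (S n))) * conv_dist alpha (S n).
Proof.
  rewrite (INR_pq_S (S n)) by apply cf_rem_pos.
  rewrite !conv_dist_S.
  pose proof (cf_rem_pos (S n)); field; lra.
Qed.

Lemma qd_conv_dist n :
  INR (qd alpha (S n)) * conv_dist alpha n + INR (qd alpha n) * conv_dist alpha (S n) = 1.
Proof.
  induction n as [|n IH].
  - rewrite conv_dist_S, conv_dist_0; change (qd alpha 1) with (pq alpha 1).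
    rewrite (INR_pq_S 0) by apply cf_rem_pos.
    change (cf_rem alpha 0) with alpha; simpl; field; lra.
  - rewrite qd_SS, conv_dist_SS, plus_INR, mult_INR, <- IH; ring.
Qed.

Lemma pq_ge1 n : (1 <= pq alpha (S n))%nat.
Proof. apply pq_S_ge1; split; [apply cf_rem_pos | apply cf_rem_lt1]. Qed.

Lemma qd_lt_S n : (1 <= n)%nat -> (qd alpha n < qd alpha (S n))%nat.
Proof.
  intros Hn; destruct n as [|n]; [lia|].
  rewrite qd_SS; pose proof (pq_ge1 (S n)); pose proof (qd_ge1 n); nia.
Qed.

Hypothesis pq1_ge2 : (2 <= pq alpha 1)%nat.

Lemma qd_ge2 n : (1 <= n)%nat -> (2 <= qd alpha n)%nat.
Proof.
  induction n as [|n IH]; intros Hn; [lia|].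
  destruct n as [|n]; [exact pq1_ge2|].
  pose proof (qd_lt_S (S n)); specialize (IH ltac:(lia)); lia.
Qed.

Lemma conv_dist_le_half n : conv_dist alpha n <= 1/2.
Proof.
  induction n as [|n IH].
  - rewrite conv_dist_0.
    assert (Hq : 2 <= INR (pq alpha 1)) by (apply (le_INR 2); exact pq1_ge2).
    rewrite (INR_pq_S 0) in Hq by apply cf_rem_pos.
    pose proof (cf_rem_pos 1); change (cf_rem alpha 0) with alpha in Hq.
    assert (2 * alpha <= / alpha * alpha) by (apply Rmult_le_compat_r; lra).
    rewrite Rinv_l in * by lra; lra.
  - pose proof (conv_dist_S_lt n); lra.
Qed.

Lemma dnint_qd n : dnint (INR (qd alpha n) * alpha) = conv_dist alpha n.
Proof.
  replace (INR (qd alpha n) * alpha)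
    with (IZR (Z.of_nat (conv_num alpha n)) + conv_err alpha n)
    by (unfold conv_err; rewrite <- INR_IZR_INZ; ring).
  apply dnint_IZR_add, conv_dist_le_half.
Qed.

Lemma qd_pred_mul_conv_dist_ge1 i : (1 <= i)%nat ->
  1 <= (INR (qd alpha (S i)) - 1)
       * (conv_dist alpha i + (INR (pq alpha (S (S i))) + 1) * conv_dist alpha (S i)).
Proof.
  intros Hi.
  pose proof (conv_dist_SS i) as HA.
  pose proof (qd_conv_dist i) as Hid.
  pose proof (conv_dist_pos (S (S i))) as HC.
  pose proof (conv_dist_S_lt (S i)) as HCB.
  assert (Ha : 1 <= INR (pq alpha (S (S i)))) by (apply (le_INR 1), pq_ge1).
  assert (HQ : INR (qd alpha i) + 1 <= INR (qd alpha (S i)))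
    by (rewrite <- S_INR; apply le_INR, qd_lt_S, Hi).
  assert (HQ' : 2 <= INR (qd alpha i)) by (apply (le_INR 2), qd_ge2, Hi).
  set (A := conv_dist alpha i) in *; set (B := conv_dist alpha (S i)) in *;
  set (C := conv_dist alpha (S (S i))) in *; set (a := INR (pq alpha (S (S i)))) in *;
  set (Q := INR (qd alpha (S i))) in *; set (Q' := INR (qd alpha i)) in *.
  (* (Q-1)(A+(a+1)B) - (QA + Q'B) = (Q-2)(a-1)B + (2Q-3-Q')B - C, with A = aB + C. *)
  assert (0 <= (Q - 2) * ((a - 1) * B)) by (apply Rmult_le_pos; nra).
  assert (0 <= (2 * Q - 4 - Q') * B) by (apply Rmult_le_pos; lra).
  nra.
Qed.

End Convergents.

Theorem lemma3p2 (alpha : R) (m k : nat) :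
  0 < alpha < 1 ->
  irrational alpha ->
  (2 <= pq alpha 1)%nat ->
  (1 <= m)%nat ->
  (2 <= k)%nat ->
  dnint (INR (qd alpha (k - 1)) * alpha)
    + (INR (pq alpha (k + 1)) + 1) * dnint (INR (qd alpha k) * alpha)
    <= dnint (INR m * alpha) ->
  forall n : nat, is_ab alpha m n -> (n < qd alpha k - 1)%nat.
Proof.
  intros Ha Hirr Hpq1 _ Hk Hmk n [Hn _].
  destruct k as [|i]; [lia|].
  replace (S i - 1)%nat with i in Hmk by lia.
  replace (S i + 1)%nat with (S (S i)) in Hmk by lia.
  rewrite !(dnint_qd alpha Ha Hirr Hpq1) in Hmk.
  pose proof (abelian_power_exponent_bound alpha m n Ha Hn) as Hexp.
  pose proof (qd_pred_mul_conv_dist_ge1 alpha Ha Hirr Hpq1 i ltac:(lia)) as Hthr.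
  set (s := conv_dist alpha i + _ * conv_dist alpha (S i)) in *.
  set (d := dnint (INR m * alpha)) in *.
  set (Q := INR (qd alpha (S i))) in *.
  assert (Hs : 0 < s).
  { pose proof (conv_dist_pos alpha Ha Hirr i).
    pose proof (conv_dist_pos alpha Ha Hirr (S i)).
    pose proof (pos_INR (pq alpha (S (S i)))).
    unfold s; nra. }
  assert (HQ : 0 < Q - 1) by nra.
  assert (Hlt : INR n * d < (Q - 1) * d).
  { apply (Rlt_le_trans _ _ _ Hexp), (Rle_trans _ _ _ Hthr).
    apply Rmult_le_compat_l; lra. }
  apply Rmult_lt_reg_r in Hlt; [|lra].
  pose proof (qd_ge1 alpha Ha (S i)).
  apply INR_lt; rewrite minus_INR by assumption; exact Hlt.
Qed.
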